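(* For every integer $n\ge 2$, the set of lower accumulation points for $n$ runners contains $\mathcal{S}(n-1)$.
   Context: For a real number $x$, $\Vert x\Vert$ denotes the distance from $x$ to the nearest integer. For positive integers $v_1,\ldots,v_n$, $\mathrm{ML}(v_1,\ldots,v_n)=\max_{t\in\mathbb{R}}\min_{1\le i\le n}\Vert t v_i\Vert$. Let $\mathcal{S}(n)=\{\mathrm{ML}(v_1,\ldots,v_n): v_1,\ldots,v_n \text{ positive integers}\}$. A real number $A$ is a lower accumulation point for $n$ runners if $\mathcal{S}(n)$ contains a sequence of elements strictly less than $A$ converging to $A$. *)

From Stdlib Require Import Reals Lra Lia List.
Import ListNotations.
Open Scope R_scope.

(* floor of a real: [up x] is the unique integer with x < up x <= x + 1 *)
Definition rfloor (x : R) : Z := (up x - 1)%Z.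

Definition dist_int (x : R) : R :=
  Rmin (x - IZR (rfloor x)) (IZR (rfloor x) + 1 - x).

(* minimum of a nonempty list of reals (value on [] is irrelevant) *)
Definition min_list (l : list R) : R :=
  match l with
  | [] => 0
  | x :: r => fold_right Rmin x r
  end.

Definition min_dist (v : list nat) (t : R) : R :=
  min_list (map (fun vi => dist_int (t * INR vi)) v).

Definition is_ML (v : list nat) (m : R) : Prop :=
  (exists t : R, min_dist v t = m) /\ (forall t : R, min_dist v t <= m).

Definition S_set (n : nat) (m : R) : Prop :=
  exists v : list nat, length v = n /\ Forall (fun vi => (0 < vi)%nat) v /\ is_ML v m.

Definition lower_acc_point (n : nat) (A : R) : Prop :=
  exists s : nat -> R,
    (forall k, S_set n (s k)) /\ (forall k, s k < A) /\ Un_cv s A.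

From Stdlib Require Import Reals Lra Lia List ZArith Classical ClassicalEpsilon.
Import ListNotations.
Open Scope R_scope.

(* Let v realise A = ML(v) with n - 1 runners.  At every maximiser t of
   min_i ||t v_i|| some pair satisfies t (v_i + v_j) in Z: otherwise all runners
   at distance exactly A lie on the same side of their nearest integers, and a
   small shift of t in that direction raises the minimum.  Hence a new runner
   whose speed w is a multiple of every v_i + v_j stands at an integer whenever
   the others are optimal, so ML(w, v) < A.  Conversely, moving a maximiser for
   v by at most 1/w puts the new runner at 1/2 while costing the others at most
   (max v)/w, so ML(w, v) >= A - (max v)/w.  The speeds w_k = (k + 1) P, with P a
   common multiple of the pair sums, give a sequence in S(n) below A tending to A. *)

Lemma rfloor_spec (x : R) : IZR (rfloor x) <= x < IZR (rfloor x) + 1.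
Proof.
  unfold rfloor; destruct (archimed x) as [Hup Hle].
  rewrite minus_IZR; simpl; lra.
Qed.

Lemma dist_int_le_Rabs (x : R) (k : Z) : dist_int x <= Rabs (x - IZR k).
Proof.
  pose proof (rfloor_spec x) as Hf; unfold dist_int.
  set (f := rfloor x) in *.
  destruct (Z_le_gt_dec k f) as [Hk | Hk].
  - apply IZR_le in Hk.
    apply Rle_trans with (x - IZR f); [apply Rmin_l |].
    rewrite Rabs_right; lra.
  - assert (Hk1 : IZR f + 1 <= IZR k) by (rewrite <- plus_IZR; apply IZR_le; lia).
    apply Rle_trans with (IZR f + 1 - x); [apply Rmin_r |].
    rewrite Rabs_left1; lra.
Qed.

Lemma dist_int_attained (x : R) : exists k : Z, dist_int x = Rabs (x - IZR k).
Proof.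
  pose proof (rfloor_spec x) as Hf; unfold dist_int.
  set (f := rfloor x) in *.
  destruct (Rle_dec (x - IZR f) (IZR f + 1 - x)).
  - exists f; rewrite Rmin_left, Rabs_right; lra.
  - exists (f + 1)%Z; rewrite Rmin_right, plus_IZR, Rabs_left1; simpl; lra.
Qed.

Lemma dist_int_le_half (x : R) : dist_int x <= 1 / 2.
Proof.
  pose proof (rfloor_spec x); unfold dist_int.
  pose proof (Rmin_l (x - IZR (rfloor x)) (IZR (rfloor x) + 1 - x)).
  pose proof (Rmin_r (x - IZR (rfloor x)) (IZR (rfloor x) + 1 - x)).
  lra.
Qed.

Lemma dist_int_lipschitz (x y : R) : dist_int x <= dist_int y + Rabs (x - y).
Proof.
  destruct (dist_int_attained y) as [k Hk].
  apply Rle_trans with (Rabs (x - IZR k)); [apply dist_int_le_Rabs |].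
  rewrite Hk; replace (x - IZR k) with ((x - y) + (y - IZR k)) by ring.
  pose proof (Rabs_triang (x - y) (y - IZR k)); lra.
Qed.

Lemma dist_int_shift (k : Z) (y : R) : Rabs y <= 1 / 2 -> dist_int (IZR k + y) = Rabs y.
Proof.
  intros Hy; apply Rle_antisym.
  - pose proof (dist_int_le_Rabs (IZR k + y) k) as H.
    replace (IZR k + y - IZR k) with y in H by ring; exact H.
  - destruct (dist_int_attained (IZR k + y)) as [k' ->].
    destruct (Z.eq_dec k' k) as [-> | Hne].
    + replace (IZR k + y - IZR k) with y by ring; lra.
    + assert (Hgap : 1 <= Rabs (IZR k - IZR k')).
      { rewrite <- minus_IZR, <- abs_IZR; apply IZR_le; lia. }
      pose proof (Rabs_triang_inv (IZR k - IZR k') (- y)) as H.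
      rewrite Rabs_Ropp in H.
      replace (IZR k - IZR k' - - y) with (IZR k + y - IZR k') in H by ring.
      lra.
Qed.

Lemma dist_int_periodic (x : R) (k : Z) : dist_int (x + IZR k) = dist_int x.
Proof.
  destruct (dist_int_attained x) as [k0 Hk0].
  pose proof (dist_int_le_half x) as Hhalf; rewrite Hk0 in Hhalf.
  replace (x + IZR k) with (IZR (k0 + k) + (x - IZR k0)) by (rewrite plus_IZR; ring).
  rewrite dist_int_shift; auto.
Qed.

Lemma dist_int_IZR (k : Z) : dist_int (IZR k) = 0.
Proof.
  replace (IZR k) with (IZR k + 0) by ring.
  rewrite dist_int_shift; rewrite Rabs_R0; lra.
Qed.

Lemma min_list_In (l : list R) : l <> [] -> In (min_list l) l.
Proof.
  destruct l as [| x r]; [congruence | intros _; simpl].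
  induction r as [| a r IH]; simpl; [now left |].
  apply Rmin_case; [now right; left |].
  destruct IH as [H | H]; [now left | now right; right].
Qed.

Lemma min_list_le (l : list R) (y : R) : In y l -> min_list l <= y.
Proof.
  destruct l as [| x r]; [contradiction | simpl].
  induction r as [| a r IH]; simpl.
  - intros [-> | []]; lra.
  - intros [-> | [-> | Hy]].
    + eapply Rle_trans; [apply Rmin_r | apply IH; now left].
    + apply Rmin_l.
    + eapply Rle_trans; [apply Rmin_r | apply IH; now right].
Qed.

Lemma In_le_list_max (l : list nat) (i : nat) : In i l -> (i <= list_max l)%nat.
Proof.
  intros Hi.
  assert (Hall : Forall (fun k => (k <= list_max l)%nat) l) by now apply list_max_le.
  now rewrite Forall_forall in Hall; apply Hall.
Qed.

Section MinDist.

Variable v : list nat.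
Hypothesis v_nonempty : v <> [].

Lemma min_dist_attained (t : R) :
  exists i, In i v /\ min_dist v t = dist_int (t * INR i).
Proof.
  assert (Hmap : map (fun i => dist_int (t * INR i)) v <> []).
  { destruct v; [congruence | discriminate]. }
  destruct (proj1 (in_map_iff _ _ _) (min_list_In _ Hmap)) as [i [Hi Hin]].
  now exists i.
Qed.

Lemma min_dist_le (t : R) (i : nat) : In i v -> min_dist v t <= dist_int (t * INR i).
Proof.
  intros Hi; apply min_list_le, in_map_iff; now exists i.
Qed.

Lemma min_dist_ge (t m : R) :
  (forall i, In i v -> m <= dist_int (t * INR i)) -> m <= min_dist v t.
Proof.
  intros Hm; destruct (min_dist_attained t) as [i [Hi ->]]; auto.
Qed.

Lemma min_dist_gt (t m : R) :
  (forall i, In i v -> m < dist_int (t * INR i)) -> m < min_dist v t.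
Proof.
  intros Hm; destruct (min_dist_attained t) as [i [Hi ->]]; auto.
Qed.

Lemma min_dist_le_half (t : R) : min_dist v t <= 1 / 2.
Proof.
  destruct (min_dist_attained t) as [i [_ ->]]; apply dist_int_le_half.
Qed.

Lemma min_dist_periodic (t : R) (k : Z) : min_dist v (t + IZR k) = min_dist v t.
Proof.
  unfold min_dist; f_equal; apply map_ext; intros i.
  replace ((t + IZR k) * INR i) with (t * INR i + IZR (k * Z.of_nat i))
    by (rewrite mult_IZR, <- INR_IZR_INZ; ring).
  apply dist_int_periodic.
Qed.

Lemma min_dist_lipschitz (t t' : R) :
  min_dist v t <= min_dist v t' + INR (list_max v) * Rabs (t - t').
Proof.
  destruct (min_dist_attained t') as [i [Hi ->]].
  apply Rle_trans with (dist_int (t * INR i)); [now apply min_dist_le |].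
  eapply Rle_trans; [apply dist_int_lipschitz |].
  replace (t * INR i - t' * INR i) with ((t - t') * INR i) by ring.
  rewrite Rabs_mult, (Rabs_pos_eq (INR i)) by apply pos_INR.
  apply Rplus_le_compat_l; rewrite Rmult_comm.
  apply Rmult_le_compat_r; [apply Rabs_pos | apply le_INR, In_le_list_max, Hi].
Qed.

Lemma min_dist_continuous (t : R) : continuity_pt (min_dist v) t.
Proof.
  set (V := INR (list_max v)); assert (HV : 0 <= V) by apply pos_INR.
  intros eps Heps.
  exists (eps / (V + 1)); split; [apply Rdiv_lt_0_compat; lra |].
  intros t' [_ Ht']; simpl in *; unfold R_dist in *.
  pose proof (min_dist_lipschitz t' t) as H1.
  pose proof (min_dist_lipschitz t t') as H2.
  rewrite Rabs_minus_sym in H2; fold V in H1, H2.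
  assert (Hsmall : V * Rabs (t' - t) < eps).
  { apply Rmult_lt_compat_r with (r := V + 1) in Ht'; [| lra].
    unfold Rdiv in Ht'; rewrite Rmult_assoc, Rinv_l, Rmult_1_r in Ht' by lra.
    pose proof (Rabs_pos (t' - t)); nra. }
  apply Rabs_def1; lra.
Qed.

Lemma min_dist_cons_le (w : nat) (t : R) : min_dist (w :: v) t <= min_dist v t.
Proof.
  destruct (min_dist_attained t) as [i [Hi ->]].
  apply min_list_le, in_map_iff; exists i; split; [reflexivity | now right].
Qed.

End MinDist.

Lemma is_ML_exists (v : list nat) : v <> [] -> exists m, is_ML v m.
Proof.
  intros Hv.
  destruct (continuity_ab_maj (min_dist v) 0 1 ltac:(lra)
              (fun c _ => min_dist_continuous v Hv c)) as [tmax [Hmax _]].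
  exists (min_dist v tmax); split; [now exists tmax |].
  intros t; pose proof (rfloor_spec t).
  replace t with ((t - IZR (rfloor t)) + IZR (rfloor t)) by ring.
  rewrite min_dist_periodic; apply Hmax; lra.
Qed.

Definition ML (v : list nat) : R := epsilon (inhabits 0) (is_ML v).

Lemma ML_spec (v : list nat) : v <> [] -> is_ML v (ML v).
Proof. intros Hv; unfold ML; apply epsilon_spec, is_ML_exists, Hv. Qed.

Lemma is_ML_le_half (v : list nat) (A : R) : v <> [] -> is_ML v A -> A <= 1 / 2.
Proof. intros Hv [[t <-] _]; now apply min_dist_le_half. Qed.

Lemma is_ML_pos (v : list nat) (A : R) :
  v <> [] -> Forall (fun i => (0 < i)%nat) v -> is_ML v A -> 0 < A.
Proof.
  intros Hv Hpos [_ HA]; rewrite Forall_forall in Hpos.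
  set (V := INR (list_max v)).
  destruct v as [| i0 r]; [congruence |].
  assert (HV : 1 <= V).
  { apply (le_INR 1); eapply Nat.le_trans; [apply (Hpos i0); now left |].
    apply In_le_list_max; now left. }
  apply Rlt_le_trans with (min_dist (i0 :: r) (1 / (2 * V))); [| apply HA].
  apply min_dist_gt; [discriminate |]; intros i Hi.
  assert (Hi1 : 1 <= INR i) by (apply (le_INR 1), Hpos, Hi).
  assert (HiV : INR i <= V) by (apply le_INR, In_le_list_max, Hi).
  assert (Hpos_t : 0 < 1 / (2 * V)) by (apply Rdiv_lt_0_compat; lra).
  assert (Hhalf : 1 / (2 * V) * INR i <= 1 / 2).
  { unfold Rdiv; rewrite Rmult_1_l, Rinv_mult.
    apply Rmult_le_reg_r with V; [lra |].
    replace (/ 2 * / V * INR i * V) with (/ 2 * INR i) by (field; lra).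
    nra. }
  replace (1 / (2 * V) * INR i) with (IZR 0 + 1 / (2 * V) * INR i) by (simpl; ring).
  rewrite dist_int_shift; rewrite Rabs_pos_eq; nra.
Qed.

Lemma dist_int_push_away (x s c A : R) :
  0 < A < 1 / 2 -> s = 1 \/ s = -1 -> 0 < c ->
  (A < dist_int x \/ exists k : Z, s * (x - IZR k) = A) ->
  exists d, 0 < d /\ forall e, 0 < e <= d -> A < dist_int (x + s * e * c).
Proof.
  intros HA Hs Hc Hx.
  assert (Hs_abs : forall y, Rabs (s * y) = Rabs y)
    by (intros y; destruct Hs as [-> | ->];
        [f_equal; ring | rewrite <- Rabs_Ropp; f_equal; ring]).
  destruct Hx as [Hgap | [k Hk]].
  - exists ((dist_int x - A) / (2 * c)); split; [apply Rdiv_lt_0_compat; lra |].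
    intros e [He0 Hed].
    assert (Hec : e * c <= (dist_int x - A) / 2).
    { apply Rmult_le_compat_r with (r := c) in Hed; [| lra].
      replace ((dist_int x - A) / (2 * c) * c) with ((dist_int x - A) / 2) in Hed
        by (field; lra).
      exact Hed. }
    pose proof (dist_int_lipschitz x (x + s * e * c)) as Hlip.
    replace (x - (x + s * e * c)) with (- (s * (e * c))) in Hlip by ring.
    rewrite Rabs_Ropp, Hs_abs, Rabs_pos_eq in Hlip by nra.
    lra.
  - exists ((1 / 2 - A) / c); split; [apply Rdiv_lt_0_compat; lra |].
    intros e [He0 Hed].
    assert (Hec : e * c <= 1 / 2 - A).
    { apply Rmult_le_compat_r with (r := c) in Hed; [| lra].
      replace ((1 / 2 - A) / c * c) with (1 / 2 - A) in Hed by (field; lra).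
      exact Hed. }
    assert (Hx : x = IZR k + s * A) by (destruct Hs as [-> | ->]; lra).
    replace (x + s * e * c) with (IZR k + s * (A + e * c)) by (rewrite Hx; ring).
    rewrite dist_int_shift; rewrite Hs_abs, Rabs_pos_eq; nra.
Qed.

Lemma ex_common_step (P : nat -> R -> Prop) (l : list nat) :
  (forall i, In i l -> exists d, 0 < d /\ forall e, 0 < e <= d -> P i e) ->
  exists d, 0 < d /\ forall i, In i l -> forall e, 0 < e <= d -> P i e.
Proof.
  induction l as [| a l IH]; intros Hl.
  - exists 1; split; [lra | intros i []].
  - destruct (Hl a (or_introl eq_refl)) as [da [Hda Ha]].
    destruct IH as [dl [Hdl Hl']]; [intros i Hi; apply Hl; now right |].
    exists (Rmin da dl); split; [now apply Rmin_glb_lt |].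
    pose proof (Rmin_l da dl); pose proof (Rmin_r da dl).
    intros i [<- | Hi] e He; [apply Ha | apply Hl']; auto; lra.
Qed.

Lemma dist_int_ge_cases (x A : R) :
  A <= dist_int x ->
  A < dist_int x \/ exists k : Z, x - IZR k = A \/ x - IZR k = - A.
Proof.
  intros Hle; destruct (Rle_lt_or_eq_dec _ _ Hle) as [Hlt | Heq]; [now left | right].
  destruct (dist_int_attained x) as [k Hk]; exists k.
  rewrite Heq, Hk; destruct (Rcase_abs (x - IZR k)).
  - rewrite Rabs_left; lra.
  - rewrite Rabs_right; lra.
Qed.

(* If every runner at distance exactly [A] sits on the [s] side of its nearest
   integer, moving [t] slightly in direction [s] pushes all of them away. *)
Lemma min_dist_improvable (v : list nat) (A t s : R) :
  v <> [] -> Forall (fun i => (0 < i)%nat) v -> 0 < A < 1 / 2 -> s = 1 \/ s = -1 ->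
  (forall i, In i v ->
     A < dist_int (t * INR i) \/ exists k : Z, s * (t * INR i - IZR k) = A) ->
  exists t', A < min_dist v t'.
Proof.
  intros Hv Hpos HA Hs Hside; rewrite Forall_forall in Hpos.
  destruct (ex_common_step (fun i e => A < dist_int (t * INR i + s * e * INR i)) v)
    as [d [Hd Hstep]].
  { intros i Hi; apply dist_int_push_away; auto; apply lt_0_INR, Hpos, Hi. }
  exists (t + s * d); apply min_dist_gt; auto; intros i Hi.
  replace ((t + s * d) * INR i) with (t * INR i + s * d * INR i) by ring.
  apply Hstep; auto; lra.
Qed.

Lemma is_ML_maximizer_pair_sum (v : list nat) (A t : R) :
  v <> [] -> Forall (fun i => (0 < i)%nat) v -> is_ML v A -> min_dist v t = A ->
  exists i j (z : Z), In i v /\ In j v /\ t * (INR i + INR j) = IZR z.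
Proof.
  intros Hv Hpos HML Ht; apply NNPP; intros Hno_pair.
  assert (Hopposite : forall i j k k', In i v -> In j v ->
            t * INR i - IZR k = A -> t * INR j - IZR k' = - A -> False).
  { intros i j k k' Hi Hj Hik Hjk'; apply Hno_pair; exists i, j, (k + k')%Z.
    rewrite plus_IZR; repeat split; auto; lra. }
  assert (Htight : forall i, In i v -> A < dist_int (t * INR i) \/
            exists k : Z, t * INR i - IZR k = A \/ t * INR i - IZR k = - A).
  { intros i Hi; apply dist_int_ge_cases; rewrite <- Ht; now apply min_dist_le. }
  assert (HA : 0 < A < 1 / 2).
  { split; [now apply (is_ML_pos v) |].
    destruct (min_dist_attained v Hv t) as [i [Hi Hti]].
    pose proof (dist_int_le_half (t * INR i)) as Hhalf; rewrite <- Hti, Ht in Hhalf.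
    destruct (Rle_lt_or_eq_dec _ _ Hhalf) as [Hlt | Heq]; [exact Hlt | exfalso].
    (* a runner at distance 1/2 lies on both sides of an integer *)
    destruct (Htight i Hi) as [Hlt | [k [Hk | Hk]]]; [lra | |].
    - apply (Hopposite i i k (k + 1)%Z); rewrite ?plus_IZR; auto; lra.
    - apply (Hopposite i i (k - 1)%Z k); rewrite ?minus_IZR; auto; lra. }
  assert (Hside : exists s, (s = 1 \/ s = -1) /\ forall i, In i v ->
            A < dist_int (t * INR i) \/ exists k : Z, s * (t * INR i - IZR k) = A).
  { destruct (classic (exists i k, In i v /\ t * INR i - IZR k = A))
      as [[i0 [k0 [Hi0 Hk0]]] | Hnone].
    - exists 1; split; [now left |]; intros i Hi.
      destruct (Htight i Hi) as [Hlt | [k [Hk | Hk]]]; [now left | right | exfalso].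
      + exists k; lra.
      + exact (Hopposite i0 i k0 k Hi0 Hi Hk0 Hk).
    - exists (-1); split; [now right |]; intros i Hi.
      destruct (Htight i Hi) as [Hlt | [k [Hk | Hk]]]; [now left | exfalso | right].
      + apply Hnone; now exists i, k.
      + exists k; lra. }
  destruct Hside as [s [Hs Hside]].
  destruct (min_dist_improvable v A t s Hv Hpos HA Hs Hside) as [t' Ht'].
  destruct HML as [_ Hmax]; specialize (Hmax t'); lra.
Qed.

Lemma ex_common_multiple (l : list nat) :
  Forall (fun x => (0 < x)%nat) l ->
  exists P, (0 < P)%nat /\ forall x, In x l -> Nat.divide x P.
Proof.
  induction 1 as [| x l Hx _ [P [HP Hdiv]]].
  - exists 1%nat; split; [lia | intros x []].
  - exists (x * P)%nat; split; [lia |].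
    intros y [<- | Hy]; [apply Nat.divide_factor_l | apply Nat.divide_mul_r, Hdiv, Hy].
Qed.

Lemma ex_pair_sum_multiple (v : list nat) :
  Forall (fun i => (0 < i)%nat) v ->
  exists P, (0 < P)%nat /\ forall i j, In i v -> In j v -> Nat.divide (i + j) P.
Proof.
  intros Hpos; rewrite Forall_forall in Hpos.
  destruct (ex_common_multiple (map (fun p => fst p + snd p)%nat (list_prod v v)))
    as [P [HP Hdiv]].
  - apply Forall_forall; intros x Hx.
    apply in_map_iff in Hx as [[i j] [<- Hij]]; apply in_prod_iff in Hij as [Hi _].
    simpl; specialize (Hpos i Hi); lia.
  - exists P; split; [exact HP |]; intros i j Hi Hj.
    apply Hdiv, in_map_iff; exists (i, j); split; [reflexivity | now apply in_prod].
Qed.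

Lemma is_ML_cons_le (v : list nat) (w : nat) (A B : R) :
  v <> [] -> is_ML v A -> is_ML (w :: v) B -> B <= A.
Proof.
  intros Hv [_ HA] [[t <-] _].
  apply Rle_trans with (min_dist v t); [apply min_dist_cons_le, Hv | apply HA].
Qed.

Lemma is_ML_cons_pair_sum_multiple_lt (v : list nat) (w : nat) (A B : R) :
  v <> [] -> Forall (fun i => (0 < i)%nat) v ->
  (forall i j, In i v -> In j v -> Nat.divide (i + j) w) ->
  is_ML v A -> is_ML (w :: v) B -> B < A.
Proof.
  intros Hv Hpos Hdiv HA HB.
  pose proof (is_ML_cons_le v w A B Hv HA HB) as Hle.
  destruct (Rle_lt_or_eq_dec _ _ Hle) as [Hlt | ->]; [exact Hlt |].
  destruct HB as [[t Ht] _].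
  assert (Hvt : min_dist v t = A).
  { apply Rle_antisym; [apply HA | rewrite <- Ht; apply min_dist_cons_le, Hv]. }
  destruct (is_ML_maximizer_pair_sum v A t Hv Hpos HA Hvt) as [i [j [z [Hi [Hj Hz]]]]].
  destruct (Hdiv i j Hi Hj) as [q Hq].
  assert (Hw : dist_int (t * INR w) = 0).
  { rewrite Hq, mult_INR, plus_INR.
    replace (t * (INR q * (INR i + INR j))) with (IZR (Z.of_nat q * z))
      by (rewrite mult_IZR, <- INR_IZR_INZ, <- Hz; ring).
    apply dist_int_IZR. }
  pose proof (min_dist_le (w :: v) t w (or_introl eq_refl)) as H0.
  pose proof (is_ML_pos v A Hv Hpos HA).
  lra.
Qed.

Lemma is_ML_cons_ge (v : list nat) (w : nat) (A B : R) :
  v <> [] -> (0 < w)%nat -> is_ML v A -> is_ML (w :: v) B ->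
  A - INR (list_max v) / INR w <= B.
Proof.
  intros Hv Hw HA [_ HB].
  pose proof (is_ML_le_half v A Hv HA) as Hhalf.
  destruct HA as [[ts Hts] _].
  set (V := INR (list_max v)); assert (HV : 0 <= V) by apply pos_INR.
  set (W := INR w); assert (HW : 0 < W) by (apply lt_0_INR; lia).
  set (t := (IZR (rfloor (ts * W)) + 1 / 2) / W).
  assert (Hclose : Rabs (ts - t) <= 1 / W).
  { pose proof (rfloor_spec (ts * W)).
    replace (ts - t) with ((ts * W - IZR (rfloor (ts * W)) - 1 / 2) * / W)
      by (unfold t; field; lra).
    rewrite Rabs_mult, (Rabs_pos_eq (/ W)) by (apply Rlt_le, Rinv_0_lt_compat, HW).
    unfold Rdiv; apply Rmult_le_compat_r; [apply Rlt_le, Rinv_0_lt_compat, HW |].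
    apply Rabs_le; lra. }
  assert (Hcost : V * Rabs (ts - t) <= V / W).
  { unfold Rdiv; rewrite <- (Rmult_1_l (/ W)); apply Rmult_le_compat_l; auto. }
  assert (HVW : 0 <= V / W)
    by (apply Rmult_le_pos; [exact HV | apply Rlt_le, Rinv_0_lt_compat, HW]).
  apply Rle_trans with (min_dist (w :: v) t); [| apply HB].
  apply min_dist_ge; [discriminate |]; intros i [<- | Hi].
  - fold W; replace (t * W) with (IZR (rfloor (ts * W)) + 1 / 2)
      by (unfold t; field; lra).
    rewrite dist_int_shift; rewrite Rabs_pos_eq; lra.
  - pose proof (min_dist_lipschitz v Hv ts t) as Hlip; fold V in Hlip.
    pose proof (min_dist_le v t i Hi); lra.
Qed.

Lemma Un_cv_from_below (s : nat -> R) (A C : R) :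
  (forall k, A - C / INR (S k) <= s k <= A) -> Un_cv s A.
Proof.
  intros Hs eps Heps.
  destruct (INR_unbounded (C / eps)) as [N HN].
  exists N; intros k Hk; unfold R_dist.
  specialize (Hs k).
  assert (HSk : INR N < INR (S k)) by (apply lt_INR; lia).
  pose proof (pos_INR N).
  assert (Hrate : C / INR (S k) < eps).
  { apply Rmult_lt_reg_r with (INR (S k)); [lra |].
    unfold Rdiv; rewrite Rmult_assoc, Rinv_l, Rmult_1_r by lra.
    apply Rmult_lt_compat_r with (r := eps) in HN; [| lra].
    unfold Rdiv in HN; rewrite Rmult_assoc, Rinv_l, Rmult_1_r in HN by lra.
    nra. }
  rewrite Rabs_left1; lra.
Qed.

Theorem theorem9p5 : forall (n : nat), (2 <= n)%nat ->
  forall A : R, S_set (n - 1) A -> lower_acc_point n A.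
Proof.
  intros n Hn A [v [Hlen [Hpos HA]]].
  assert (Hv : v <> []) by (intros ->; simpl in Hlen; lia).
  destruct (ex_pair_sum_multiple v Hpos) as [P [HP Hdiv]].
  set (w k := (S k * P)%nat).
  assert (Hw : forall k, is_ML (w k :: v) (ML (w k :: v)))
    by (intros k; apply ML_spec; discriminate).
  assert (Hlt : forall k, ML (w k :: v) < A).
  { intros k; apply (is_ML_cons_pair_sum_multiple_lt v (w k)); auto.
    intros i j Hi Hj; apply Nat.divide_mul_r, Hdiv; auto. }
  exists (fun k => ML (w k :: v)); split; [| split; [exact Hlt |]].
  - intros k; exists (w k :: v); split; [simpl; lia | split; [| apply Hw]].
    constructor; [unfold w; lia | exact Hpos].
  - apply Un_cv_from_below with (C := INR (list_max v)).
    intros k; split; [| apply Rlt_le, Hlt].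
    eapply Rle_trans; [| apply (is_ML_cons_ge v (w k) A); auto; unfold w; nia].
    apply Rplus_le_compat_l, Ropp_le_contravar; unfold Rdiv.
    apply Rmult_le_compat_l; [apply pos_INR |].
    apply Rinv_le_contravar; [apply lt_0_INR; lia | apply le_INR; unfold w; nia].
Qed.
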